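(* Let $E$ be a row-finite graph, $k$ a field, $h$ a positive integer, and suppose $\{1,\dots,h\}=\bigsqcup_{v\in E^0}Z(v)$ for subsets $Z(v)$. Let $\sigma=\bigsqcup_v\sigma_v$ be a permutation of $\{1,\dots,h\}$ where each $\sigma_v$ is a permutation of $Z(v)$, and set $S=\sum_{v\in E^0}\sum_{t\in Z(v)}vE_{t,\sigma_v(t)}\in M_h(L_k(E))$. Then $SS^*=S^*S=\sum_{v}\sum_{t\in Z(v)}vE_{t,t}$ is a projection in $M_h(L_k(E))$, and $$[S+(1_h-SS^* )]_1=\sum_{v\in E^0}[\operatorname{sign}(\sigma_v)v]_1\in K_1(L_k(E)).$$
   Context: $L_k(E)$ is the Leavitt path algebra of the row-finite graph $E$ (generated by $E^0\cup E^1\cup\{e^*\}$ with relations $vw=\delta_{v,w}v$, $s(e)e=e=er(e)$, $r(e)e^*=e^*=e^*s(e)$, $e^*f=\delta_{e,f}r(e)$, $v=\sum_{s(e)=v}ee^*$ for non-sinks), with involution fixing vertices and sending $e\mapsto e^*$. $E_{s,t}$ are matrix units; $1_h$ is the identity of $M_h$ over the unitization $\widetilde{L_k(E)}$, and $[U]_1$ denotes the class in $K_1(L_k(E))$ of an invertible matrix over $\widetilde{L_k(E)}$ congruent to $1$ modulo $L_k(E)$. For $\lambda\in k^\times$ and $v\in E^0$, $[\lambda v]_1$ denotes the class of $\lambda v+(1-v)$. *)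

From HB Require Import structures.
From mathcomp Require Import all_boot all_order all_algebra all_fingroup.
From Stdlib Require List.
Set Implicit Arguments. Unset Strict Implicit. Unset Printing Implicit Defensive.
Import GRing.Theory.
Local Open Scope ring_scope.

(* A row-finite directed graph E = (E^0, E^1, s, r).  Row-finiteness is
   witnessed by a duplicate-free finite list [out v] of the edges with source v. *)
Record rf_graph := RFGraph {
  V0 : eqType;
  E1 : Type;
  src : E1 -> V0;
  rng : E1 -> V0;
  out : V0 -> seq E1;
  out_spec : forall v e, List.In e (out v) <-> src e = v;
  out_nodup : forall v, List.NoDup (out v)
}.

Section Leavitt.
Variable k : fieldType.
Variable E : rf_graph.

(* p v, a e, b e play the roles of v, e, e^* ; the Leavitt relations. *)
Definition leavitt_family (B : algType k)
  (p : V0 E -> B) (a b : E1 E -> B) : Prop :=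
  (forall v, p v * p v = p v) /\
  (forall v w, v <> w -> p v * p w = 0) /\
  (forall e, p (src e) * a e = a e /\ a e * p (rng e) = a e) /\
  (forall e, p (rng e) * b e = b e /\ b e * p (src e) = b e) /\
  (forall e, b e * a e = p (rng e)) /\
  (forall e f, e <> f -> b e * a f = 0) /\
  (forall v, out v <> [::] -> p v = \sum_(e <- out v) a e * b e).

Definition alg_hom (A B : algType k) (f : A -> B) : Prop :=
  [/\ f 1 = 1, (forall x y, f (x + y) = f x + f y),
      (forall x y, f (x * y) = f x * f y) &
      (forall (c : k) x, f (c *: x) = c *: f x)].

(* R (with p, a, b) is the universal UNITAL k-algebra generated by a Leavitt
   E-family.  Since all Leavitt relations lie in the augmentation ideal of the
   free unital algebra, R is exactly the unitization ~L_k(E) = k 1 (+) L_k(E),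
   with L_k(E) the ideal generated by p, a, b. *)
Definition leavitt_unitization (R : algType k)
  (p : V0 E -> R) (a b : E1 E -> R) : Prop :=
  leavitt_family p a b /\
  forall (B : algType k) (p' : V0 E -> B) (a' b' : E1 E -> B),
    leavitt_family p' a' b' ->
    exists f : R -> B,
      [/\ alg_hom f, (forall v, f (p v) = p' v), (forall e, f (a e) = a' e),
          (forall e, f (b e) = b' e) &
          (forall g : R -> B, alg_hom g -> (forall v, g (p v) = p' v) ->
             (forall e, g (a e) = a' e) -> (forall e, g (b e) = b' e) ->
             forall x, g x = f x)].

Definition leavitt_involution (R : algType k) (star : R -> R)
  (p : V0 E -> R) (a b : E1 E -> R) : Prop :=
  star 1 = 1 /\ (forall x y, star (x + y) = star x + star y) /\
  (forall (c : k) x, star (c *: x) = c *: star x) /\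
  (forall x y, star (x * y) = star y * star x) /\
  (forall x, star (star x) = x) /\
  (forall v, star (p v) = p v) /\
  (forall e, star (a e) = b e /\ star (b e) = a e).
End Leavitt.

Definition mxstar (R : pzRingType) (f : R -> R) n (M : 'M[R]_n) : 'M[R]_n :=
  \matrix_(i, j) f (M j i).

Definition mx_invertible (R : pzRingType) n (M : 'M[R]_n) : Prop :=
  exists N : 'M[R]_n, M *m N = 1%:M /\ N *m M = 1%:M.

Definition elementary_mx (R : pzRingType) n (M : 'M[R]_n) : Prop :=
  exists (i j : 'I_n) (c : R), i != j /\ M = 1%:M + c *: delta_mx i j.

Definition elem_prod (R : pzRingType) n (M : 'M[R]_n) : Prop :=
  exists l : seq 'M[R]_n, (forall N, N \in l -> elementary_mx N) /\
                          M = foldr mulmx 1%:M l.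

(* Equality of classes in K_1(R) = GL(R)/E(R) of invertible matrices
   A : 'M_m and B : 'M_n: after stabilising to a common size,
   A = P B with P in E(R). *)
Definition k1_eq (R : pzRingType) m (A : 'M[R]_m) n (B : 'M[R]_n) : Prop :=
  exists (x y : nat) (Hxy : (m + x = n + y)%N) (P : 'M[R]_(m + x)),
    elem_prod P /\
    block_mx A 0 0 (1%:M : 'M[R]_x) =
      P *m castmx (esym Hxy, esym Hxy) (block_mx B 0 0 (1%:M : 'M[R]_y)).

(* sigma_v as a permutation of {1..h} which is sigma on Z(v) and the identity
   elsewhere (same sign as sigma_v viewed in Sym(Z(v))). *)
Lemma restr_perm_inj (V : eqType) (h : nat) (z : 'I_h -> V) (s : 'S_h)
  (Hs : forall t, z (s t) = z t) (v : V) :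
  injective (fun t => if z t == v then s t else t).
Proof.
move=> t1 t2 /=.
case: ifP => H1; case: ifP => H2.
- exact: perm_inj.
- by move=> E; move: H2; rewrite -E Hs H1.
- by move=> E; move: H1; rewrite E Hs H2.
- by [].
Qed.

Definition restr_perm_v (V : eqType) h (z : 'I_h -> V) (s : 'S_h)
  (Hs : forall t, z (s t) = z t) (v : V) : 'S_h := perm (@restr_perm_inj V h z s Hs v).

From HB Require Import structures.
From mathcomp Require Import all_boot all_order all_algebra all_fingroup.
Import GRing.Theory.
Local Open Scope ring_scope.
Set Implicit Arguments. Unset Strict Implicit. Unset Printing Implicit Defensive.

(* S is the monomial matrix with entry p (z t) at (t, sigma t).  As the
   vertices are self-adjoint idempotents and sigma preserves z, S S^* = S^* S
   = Pr, so S is a partial isometry and U = S + (1 - Pr) is invertible with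
   inverse S^* + (1 - Pr).
   For K_1, write U = 1 + sum_v v (P_v - 1), with P_v in M_h(k) the
   permutation matrix of sigma_v.  Since the vertices are orthogonal
   idempotents, (A_v)_v |-> 1 + sum_v v (A_v - 1) is multiplicative and maps
   families of elementary products to elementary products.  Over k, P_v is a product of
   elementary matrices times the dilation by sign(sigma_v) at any chosen
   position; choosing the position of v in the list of vertices turns the
   image of the dilations into the diagonal matrix of the
   sign(sigma_v) v + (1 - v), and stabilising gives the K_1 equality. *)

Section ElementaryEquivalence.
Variables (T : pzRingType) (n : nat).
Implicit Types A B C P Q X : 'M[T]_n.

Definition elem_equiv A B := exists2 P, elem_prod P & A = P *m B.

Lemma elem_prod1 : elem_prod (1%:M : 'M[T]_n).
Proof. by exists [::]. Qed.

Lemma elem_prod_elementary X : elementary_mx X -> elem_prod X.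
Proof. by move=> HX; exists [:: X]; rewrite /= mulmx1; split=> // N /[!inE] /eqP->. Qed.

Lemma elem_prodM P Q : elem_prod P -> elem_prod Q -> elem_prod (P *m Q).
Proof.
move=> [l1 [H1 ->]] [l2 [H2 ->]]; exists (l1 ++ l2); split.
  by move=> N; rewrite mem_cat => /orP[/H1|/H2].
by rewrite foldr_cat; elim: l1 {H1} => [|Y l IH] /=; rewrite ?mul1mx // -mulmxA IH.
Qed.

Lemma elem_prod_foldr (l : seq 'M[T]_n) :
  (forall P, P \in l -> elem_prod P) -> elem_prod (foldr mulmx 1%:M l).
Proof.
elim: l => [|P l IH] Hl /=; first exact: elem_prod1.
by apply: elem_prodM; [apply/Hl/mem_head | apply: IH => Q HQ; apply/Hl/mem_behead].
Qed.

Lemma elem_prod_ind (Q : 'M[T]_n -> Prop) :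
  Q 1%:M -> (forall X P, elementary_mx X -> Q P -> Q (X *m P)) ->
  forall P, elem_prod P -> Q P.
Proof.
move=> Q1 QM _ [l [Hl ->]]; elim: l Hl => [|X l IH] Hl //=.
by apply: QM; [apply/Hl/mem_head | apply: IH => N HN; apply/Hl/mem_behead].
Qed.

Lemma elementary_inv X : elementary_mx X ->
  exists2 Y, elementary_mx Y & Y *m X = 1%:M.
Proof.
move=> [i [j [c [Hij ->]]]]; exists (1%:M + (- c) *: delta_mx i j).
  by exists i, j, (- c).
have sq0 : delta_mx i j *m (c *: delta_mx i j) = 0 :> 'M[T]_n.
  apply/matrixP=> r s; rewrite !mxE big1 // => l _; rewrite !mxE.
  case: (r == i); rewrite ?mul0r //=; case: eqP => [->|_]; rewrite ?mul0r //.
  by case: eqP => [Eji|_] /=; [rewrite Eji eqxx in Hij | rewrite mulr0n !mulr0].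
rewrite mulmxDl mul1mx mulmxDr mulmx1 -scalemxAl sq0 scaler0 addr0.
by rewrite scaleNr addrK.
Qed.

Lemma elem_prod_inv P : elem_prod P -> exists2 Q, elem_prod Q & Q *m P = 1%:M.
Proof.
move=> HP; elim/elem_prod_ind: P / HP => [|X P HX [Q HQ HQP]].
  by exists 1%:M; [exact: elem_prod1 | rewrite mulmx1].
have [Y HY HYX] := elementary_inv HX.
exists (Q *m Y); first by apply: elem_prodM => //; apply: elem_prod_elementary.
by rewrite mulmxA -(mulmxA Q) HYX mulmx1.
Qed.

Lemma elem_equiv_refl A : elem_equiv A A.
Proof. by exists 1%:M; rewrite ?mul1mx //; exact: elem_prod1. Qed.

Lemma elem_equiv_sym A B : elem_equiv A B -> elem_equiv B A.
Proof.
move=> [P HP ->]; have [Q HQ HQP] := elem_prod_inv HP.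
by exists Q; rewrite // mulmxA HQP mul1mx.
Qed.

Lemma elem_equiv_trans A B C : elem_equiv A B -> elem_equiv B C -> elem_equiv A C.
Proof.
move=> [P HP ->] [Q HQ ->]; exists (P *m Q); first exact: elem_prodM.
by rewrite mulmxA.
Qed.

Lemma elem_equiv_elementaryl X A B :
  elementary_mx X -> elem_equiv A B -> elem_equiv (X *m A) B.
Proof.
move=> HX [P HP ->]; exists (X *m P); last by rewrite mulmxA.
by apply: elem_prodM => //; apply: elem_prod_elementary.
Qed.
End ElementaryEquivalence.

Section Stabilization.
Variables (T : pzRingType) (m n : nat).
Implicit Types X Y P : 'M[T]_m.

Definition stab_mx X : 'M[T]_(m + n) := block_mx X 0 0 1%:M.

Lemma stab_mxM X Y : stab_mx (X *m Y) = stab_mx X *m stab_mx Y.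
Proof. by rewrite /stab_mx mulmx_block !mulmx0 !mul0mx !addr0 !add0r mulmx1. Qed.

Lemma stab_mx_elementary X : elementary_mx X -> elementary_mx (stab_mx X).
Proof.
move=> [i [j [c [Hij ->]]]]; exists (lshift n i), (lshift n j), c; split.
  by rewrite eq_lshift.
apply/matrixP => r s; rewrite -[r]splitK -[s]splitK.
case: (split r) => r'; case: (split s) => s' /=;
rewrite ?block_mxEul ?block_mxEur ?block_mxEdl ?block_mxEdr !mxE ?eq_lshift ?eq_rshift
  ?eq_lrshift ?eq_rlshift ?mxE //=; rewrite ?andbF ?andFb ?mulr0 ?addr0 //.
Qed.

Lemma stab_mx_elem_prod P : elem_prod P -> elem_prod (stab_mx P).
Proof.
elim/elem_prod_ind: P / => [|X P HX HP].
  by rewrite /stab_mx -scalar_mx_block; exact: elem_prod1.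
by rewrite stab_mxM; apply: elem_prodM => //; apply/elem_prod_elementary/stab_mx_elementary.
Qed.
End Stabilization.

Lemma k1_eq_diag_stable (T : pzRingType) h n (U : 'M[T]_h) (f : nat -> T) :
  (n <= h)%N -> elem_equiv U (diag_mx (\row_(i < h) if (i < n)%N then f i else 1)) ->
  k1_eq U (diag_mx (\row_(i < n) f i)).
Proof.
move=> nh [P HP ->]; exists n, h, (addnC h n), (stab_mx n P).
split; first exact: stab_mx_elem_prod.
rewrite -[block_mx _ _ _ _]/(stab_mx n _) stab_mxM; congr (_ *m _).
rewrite /stab_mx -!diag_const_mx -!diag_mx_row.
apply/matrixP => r s; rewrite castmxE !mxE /= (inj_eq (@cast_ord_inj _ _ _)).
congr (_ *+ _).
case: splitP => r1 Hr1; case: splitP => r2 Hr2; rewrite !mxE //=; rewrite /= in Hr2.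
- by rewrite -Hr1 Hr2 ltn_ord.
- by rewrite -Hr1 Hr2 ltnNge leq_addr.
- have := ltn_ord r2; rewrite -Hr2 Hr1 => H3.
  by have := leq_trans H3 nh; rewrite ltnNge leq_addr.
Qed.

Section PermutationMatrices.
Variables (T : pzRingType) (n : nat).
Implicit Types A B C P : 'M[T]_n.

Definition dilation_mx (c : T) (q : 'I_n) : 'M[T]_n :=
  diag_mx (\row_i if i == q then c else 1).

Lemma dilation_mx1 q : dilation_mx 1 q = 1%:M.
Proof. by apply/matrixP => r s; rewrite !mxE; case: (r == q). Qed.

Lemma dilation_mxM c1 c2 q :
  dilation_mx c1 q *m dilation_mx c2 q = dilation_mx (c1 * c2) q.
Proof.
apply/matrixP => r s; rewrite mul_diag_mx !mxE.
by case: (r =P s) => [->|_]; case: (s == q); rewrite ?mulr1n ?mulr0n ?mulr0 ?mulr1.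
Qed.

Section InvolutiveDiagonal.
Variable d : 'rV[T]_n.
Hypothesis d2 : forall i, d 0 i * d 0 i = 1.

Lemma diag_mx_invol : diag_mx d *m diag_mx d = 1%:M.
Proof.
by apply/matrixP => r s; rewrite mul_diag_mx !mxE; case: eqP => [->|]; rewrite ?d2 ?mulr0.
Qed.

Lemma conj_diag_elementary i j c :
  diag_mx d *m (1%:M + c *: delta_mx i j) *m diag_mx d =
  1%:M + (d 0 i * c * d 0 j) *: delta_mx i j.
Proof.
apply/matrixP => r s; rewrite mul_mx_diag mul_diag_mx !mxE mulrDr mulrDl.
have -> : d 0 r * (r == s)%:R * d 0 s = (r == s)%:R.
  by case: eqP => [->|_]; rewrite ?mulr1 ?d2 // mulr0 mul0r.
by case: andP => [[/eqP -> /eqP ->]|_]; rewrite ?mulr1 ?mulr0 ?mul0r ?addr0 // !mulrA.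
Qed.

Lemma elem_prod_conj_diag P :
  elem_prod P -> elem_prod (diag_mx d *m P *m diag_mx d).
Proof.
elim/elem_prod_ind: P / => [|X P [i [j [c [Hij ->]]]] IH].
  by rewrite mulmx1 diag_mx_invol; exact: elem_prod1.
set D := diag_mx d; set Y := 1%:M + _.
have -> : D *m (Y *m P) *m D = (D *m Y *m D) *m (D *m P *m D).
  by rewrite !mulmxA -(mulmxA _ D D) diag_mx_invol mulmx1.
rewrite conj_diag_elementary; apply: elem_prodM => //.
by apply: elem_prod_elementary; exists i, j, (d 0 i * c * d 0 j).
Qed.

Lemma elem_equiv_mul_diag A B C :
  elem_equiv A (diag_mx d) -> elem_equiv B C ->
  elem_equiv (A *m B) (diag_mx d *m C).
Proof.
move=> [P HP ->] [Q HQ ->]; exists (P *m (diag_mx d *m Q *m diag_mx d)).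
  by apply: elem_prodM => //; apply: elem_prod_conj_diag.
by rewrite !mulmxA -(mulmxA _ (diag_mx d) (diag_mx d)) diag_mx_invol mulmx1.
Qed.
End InvolutiveDiagonal.

Lemma mulmx_elementaryE i j c A r s :
  ((1%:M + c *: delta_mx i j) *m A) r s = A r s + (if r == i then c * A j s else 0).
Proof.
rewrite mulmxDl mul1mx mxE -scalemxAl mxE mxE (bigD1 j) //= mxE eqxx andbT.
rewrite big1 ?addr0 => [|l /negbTE Hl]; last by rewrite mxE Hl andbF mul0r.
by case: (r == i); rewrite ?mul1r ?mul0r ?mulr0.
Qed.

(* On rows and columns a, b this is the 2 x 2 identity
   [[0,1],[1,0]] = [[1,1],[0,1]] [[1,0],[-1,1]] [[1,1],[0,1]] diag(-1,1). *)
Lemma perm_mx_tperm_factor (a b : 'I_n) : a != b ->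
  perm_mx (tperm a b) = (1%:M + 1 *: delta_mx a b) *m ((1%:M + (-1) *: delta_mx b a) *m
     ((1%:M + 1 *: delta_mx a b) *m dilation_mx (-1) a)).
Proof.
move=> Hab; have Hba : b != a by rewrite eq_sym.
apply/matrixP => r s; rewrite !mulmx_elementaryE !mxE.
rewrite eqxx [b == a]eq_sym (negbTE Hab) !mul1r !mulN1r.
have [->|ra] := eqVneq r a; [rewrite tpermL | have [->|rb] := eqVneq r b;
  [rewrite tpermR | rewrite tpermD 1?eq_sym //]];
  have [->|sa] := eqVneq s a; try have [->|sb] := eqVneq s b;
  rewrite ?eqxx ?(negbTE Hab) ?(negbTE Hba) ?(negbTE ra) ?(negbTE rb) ?(negbTE sa)
    ?(negbTE sb) ?(eq_sym a s) ?(eq_sym b s) ?(negbTE sa) ?(negbTE sb) /=;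
  rewrite ?mulr1n ?mulr0n ?addr0 ?add0r ?oppr0 ?opprK ?addNr ?addrN ?addrA ?addrK ?subrr //.
all: by rewrite ?addr0.
Qed.

Lemma elem_equiv_tperm (a b : 'I_n) : a != b ->
  elem_equiv (perm_mx (tperm a b)) (dilation_mx (-1) a).
Proof.
move=> Hab; rewrite perm_mx_tperm_factor //.
apply: elem_equiv_elementaryl; first by exists a, b, 1.
apply: elem_equiv_elementaryl; first by exists b, a, (-1); rewrite eq_sym.
apply: elem_equiv_elementaryl; first by exists a, b, 1.
exact: elem_equiv_refl.
Qed.

Lemma elem_equiv_dilationN1 (a q : 'I_n) :
  elem_equiv (dilation_mx (-1) a) (dilation_mx (-1) q).
Proof.
have [->|Haq] := eqVneq a q; first exact: elem_equiv_refl.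
apply: elem_equiv_trans (elem_equiv_sym (elem_equiv_tperm Haq)) _.
by rewrite tpermC; apply: elem_equiv_tperm; rewrite eq_sym.
Qed.

Lemma elem_equiv_perm_mx (s : 'S_n) q :
  elem_equiv (perm_mx s) (dilation_mx ((-1) ^+ odd_perm s) q).
Proof.
have [ts -> Hts] := prod_tpermP s; elim: ts Hts => [_|t ts IH /= /andP[Ht Hts]].
  by rewrite big_nil perm_mx1 odd_perm1 dilation_mx1; exact: elem_equiv_refl.
rewrite big_cons perm_mxM odd_permM odd_tperm Ht signr_addb expr1 -dilation_mxM.
apply: elem_equiv_mul_diag (IH Hts).
  by move=> i; rewrite !mxE; case: (i == q); rewrite ?mulr1 ?mulrNN ?mulr1.
exact: elem_equiv_trans (elem_equiv_tperm Ht) (elem_equiv_dilationN1 _ _).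
Qed.
End PermutationMatrices.

Section MonomialMatrices.
Variables (T : pzRingType) (n : nat).
Implicit Types (f g : 'I_n -> 'I_n) (a b : 'I_n -> T).

Definition monomial_mx f a : 'M[T]_n := \matrix_(i, j) if f i == j then a i else 0.

Lemma monomial_mxM f g a b :
  monomial_mx f a *m monomial_mx g b = monomial_mx (g \o f) (fun i => a i * b (f i)).
Proof.
apply/matrixP => i j; rewrite !mxE (bigD1 (f i)) //= big1 ?addr0.
  by rewrite !mxE eqxx; case: (g (f i) == j); rewrite ?mulr0.
by move=> l /negbTE Hl; rewrite !mxE eq_sym Hl mul0r.
Qed.

Lemma eq_monomial_mx f g a b : f =1 g -> a =1 b -> monomial_mx f a = monomial_mx g b.
Proof. by move=> fg ab; apply/matrixP => i j; rewrite !mxE fg ab. Qed.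

Lemma sum_scalar_delta_mx f a :
  \sum_(t < n) (a t)%:M *m delta_mx t (f t) = monomial_mx f a.
Proof.
apply/matrixP => i j; rewrite summxE (bigD1 i) //= big1 ?addr0 => [|t ti].
  by rewrite mul_scalar_mx !mxE eqxx /= eq_sym; case: (f i == j); rewrite ?mulr1 ?mulr0.
by rewrite mul_scalar_mx !mxE eq_sym (negbTE ti) mulr0.
Qed.
End MonomialMatrices.

Section MonomialPartialIsometry.
Variables (T : pzRingType) (n : nat) (star : T -> T) (s : 'S_n) (a : 'I_n -> T).
Hypothesis star0 : star 0 = 0.
Hypothesis star_a : forall i, star (a i) = a i.
Hypothesis a_idem : forall i, a i * a i = a i.
Hypothesis a_perm : forall i, a (s i) = a i.

Let aV i : a ((s^-1)%g i) = a i. Proof. by rewrite -a_perm permKV. Qed.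

Lemma mxstar_monomial_mx : mxstar star (monomial_mx s a) = monomial_mx (s^-1)%g a.
Proof.
apply/matrixP => i j; rewrite !mxE.
have -> : (s j == i) = ((s^-1)%g i == j) by apply/eqP/eqP => [<-|<-]; rewrite ?permK ?permKV.
by case: eqP => [<-|_]; rewrite ?star_a ?aV.
Qed.

Lemma mxstar_monomial_id : mxstar star (monomial_mx id a) = monomial_mx id a.
Proof. by apply/matrixP => i j; rewrite !mxE eq_sym; case: eqP => [->|]. Qed.

Lemma monomial_id_idem : monomial_mx id a *m monomial_mx id a = monomial_mx id a.
Proof. by rewrite monomial_mxM; apply: eq_monomial_mx. Qed.

Lemma monomial_mx_mulmx_star :
  monomial_mx s a *m mxstar star (monomial_mx s a) = monomial_mx id a.
Proof.
rewrite mxstar_monomial_mx monomial_mxM; apply: eq_monomial_mx => i /=.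
  exact: permK.
by rewrite a_perm.
Qed.

Lemma mxstar_mulmx_monomial_mx :
  mxstar star (monomial_mx s a) *m monomial_mx s a = monomial_mx id a.
Proof.
rewrite mxstar_monomial_mx monomial_mxM; apply: eq_monomial_mx => i /=.
  exact: permKV.
by rewrite aV.
Qed.

Lemma monomial_mx_partial_isometry :
  monomial_mx s a *m mxstar star (monomial_mx s a) *m monomial_mx s a = monomial_mx s a.
Proof. by rewrite monomial_mx_mulmx_star monomial_mxM; apply: eq_monomial_mx. Qed.

Lemma mxstar_monomial_mx_partial_isometry :
  mxstar star (monomial_mx s a) *m monomial_mx s a *m mxstar star (monomial_mx s a) =
  mxstar star (monomial_mx s a).
Proof.
rewrite mxstar_mulmx_monomial_mx mxstar_monomial_mx monomial_mxM.
by apply: eq_monomial_mx => i //=; rewrite aV.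
Qed.
End MonomialPartialIsometry.

Lemma mx_invertible_add_compl (T : pzRingType) n (X Y : 'M[T]_n) :
  X *m Y *m X = X -> Y *m X *m Y = Y -> X *m Y = Y *m X ->
  mx_invertible (X + (1%:M - X *m Y)).
Proof.
move=> XYX YXY XY_YX; set Q := 1%:M - X *m Y.
have QQ : Q *m Q = Q.
  by rewrite mulmxBl mul1mx mulmxBr mulmx1 mulmxA XYX subrr subr0.
have compl A B : A *m B = X *m Y -> A *m Q = 0 -> Q *m B = 0 ->
    (A + Q) *m (B + Q) = 1%:M.
  move=> AB AQ QB; rewrite mulmxDl (mulmxDr A) (mulmxDr Q) AB AQ QB QQ addr0 add0r.
  by rewrite /Q addrC subrK.
exists (Y + Q); split; apply: compl; rewrite /Q ?mulmxBl ?mulmxBr ?mul1mx ?mulmx1 //.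
- by rewrite XY_YX mulmxA XYX subrr.
- by rewrite XY_YX YXY subrr.
- by rewrite mulmxA YXY subrr.
- by rewrite XYX subrr.
Qed.

Section Corners.
Variables (k : fieldType) (R : algType k) (N : nat).
Implicit Types (e f : R) (A B P X : 'M[k]_N).

Definition embed_mx e A : 'M[R]_N := map_mx (fun x => x *: e) A.

Lemma embed_mxM e f A B : embed_mx e A *m embed_mx f B = embed_mx (e * f) (A *m B).
Proof.
apply/matrixP => r s; rewrite !mxE scaler_suml; apply: eq_bigr => l _.
by rewrite !mxE -scalerAl -scalerAr scalerA.
Qed.

Lemma embed_mxD e A B : embed_mx e (A + B) = embed_mx e A + embed_mx e B.
Proof. by apply/matrixP => r s; rewrite !mxE scalerDl. Qed.

Lemma embed_mx0 e : embed_mx e 0 = 0.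
Proof. by apply/matrixP => r s; rewrite !mxE scale0r. Qed.

Lemma embed_0mx A : embed_mx 0 A = 0.
Proof. by apply/matrixP => r s; rewrite !mxE scaler0. Qed.

Definition corner_mx e A : 'M[R]_N := 1%:M + embed_mx e (A - 1%:M).

Section Idempotent.
Variable e : R.
Hypothesis ee : e * e = e.

Lemma corner_mxM A B : corner_mx e A *m corner_mx e B = corner_mx e (A *m B).
Proof.
rewrite /corner_mx mulmxDl !mulmxDr !mul1mx mulmx1 embed_mxM ee -!addrA -!embed_mxD.
congr (_ + embed_mx e _); rewrite mulmxBl !mulmxBr !mul1mx !mulmx1.
by rewrite addrCA [B - 1%:M + _]addrC subrK addrC addrA subrK.
Qed.

Lemma corner_mx_elem_prod P : elem_prod P -> elem_prod (corner_mx e P).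
Proof.
elim/elem_prod_ind: P / => [|X P [i [j [c [Hij ->]]]] IH].
  by rewrite /corner_mx subrr embed_mx0 addr0; exact: elem_prod1.
rewrite -corner_mxM; apply: elem_prodM => //; apply: elem_prod_elementary.
exists i, j, (c *: e); split => //; rewrite /corner_mx addrAC subrr add0r.
congr (_ + _); apply/matrixP => r s; rewrite !mxE.
by case: (_ && _); rewrite ?mulr1 ?mulr0 ?scale0r.
Qed.
End Idempotent.

Section OrthogonalCorners.
Variables (I : eqType) (vs : seq I) (e : I -> R).
Hypothesis vs_uniq : uniq vs.
Hypothesis e_idem : forall v, e v * e v = e v.
Hypothesis e_orth : forall u v, u != v -> e u * e v = 0.
Implicit Types F G H : I -> 'M[k]_N.

Definition corners_mx F : 'M[R]_N := 1%:M + \sum_(v <- vs) embed_mx (e v) (F v - 1%:M).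

Lemma eq_corners_mx F G : {in vs, F =1 G} -> corners_mx F = corners_mx G.
Proof. by move=> FG; congr (_ + _); apply: eq_big_seq => v /FG ->. Qed.

Lemma corners_mx_foldr F :
  corners_mx F = foldr mulmx 1%:M [seq corner_mx (e v) (F v) | v <- vs].
Proof.
rewrite /corners_mx; elim: vs vs_uniq => [|v s IH] /=; first by rewrite big_nil addr0.
case/andP=> vNs /IH <-; rewrite big_cons /corner_mx mulmxDl mul1mx mulmxDr mulmx1.
rewrite mulmx_sumr.
have -> : \sum_(u <- s) embed_mx (e v) (F v - 1%:M) *m embed_mx (e u) (F u - 1%:M) = 0.
  rewrite big_seq big1 // => u us; rewrite embed_mxM e_orth ?embed_0mx //.
  by apply: contraNneq vNs => ->.
by rewrite addr0 -addrA [embed_mx _ _ + _]addrC.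
Qed.

Lemma corners_mxM F G :
  corners_mx F *m corners_mx G = corners_mx (fun v => F v *m G v).
Proof.
rewrite /corners_mx mulmxDl !mulmxDr !mul1mx mulmx1 mulmx_suml.
have -> : \sum_(u <- vs) embed_mx (e u) (F u - 1%:M) *m
            \sum_(v <- vs) embed_mx (e v) (G v - 1%:M) =
          \sum_(v <- vs) embed_mx (e v) ((F v - 1%:M) *m (G v - 1%:M)).
  apply: eq_big_seq => u us; rewrite mulmx_sumr (bigD1_seq u) //= embed_mxM e_idem.
  rewrite big1 ?addr0 // => v vu; rewrite embed_mxM e_orth ?embed_0mx //.
  by rewrite eq_sym.
rewrite -!addrA -!big_split /=; congr (_ + _); apply: eq_bigr => v _.
rewrite -!embed_mxD; congr (embed_mx _ _).
rewrite mulmxBl !mulmxBr !mul1mx mulmx1 addrCA [G v - 1%:M + _]addrC subrK.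
by rewrite addrC addrA subrK.
Qed.

Lemma corners_mx_elem_prod H : (forall v, elem_prod (H v)) -> elem_prod (corners_mx H).
Proof.
move=> HH; rewrite corners_mx_foldr; apply: elem_prod_foldr => _ /mapP[v _ ->].
exact: corner_mx_elem_prod.
Qed.

Lemma corners_mx_elem_equiv F G :
  (forall v, elem_equiv (F v) (G v)) -> elem_equiv (corners_mx F) (corners_mx G).
Proof.
(* Induct on the indices [t] where [F] and [G] may still differ: replacing one
   [F v] by [G v] costs a single corner, which is an elementary product. *)
move=> FG; suff gen : forall (t : seq I) F, (forall v, elem_equiv (F v) (G v)) ->
    (forall u, u \in vs -> u \notin t -> F u = G u) ->
    elem_equiv (corners_mx F) (corners_mx G).
  by apply: (gen vs) => // u ->.
elim=> [|v t IH] {}F {}FG FGt.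
  by rewrite (@eq_corners_mx F G) => [|u uvs]; [exact: elem_equiv_refl | exact: FGt].
have [P HP FvP] := FG v.
pose F' u := if u == v then G v else F u.
apply: elem_equiv_trans (IH F' _ _); last 2 first.
- by move=> u; rewrite /F'; case: eqP => [->|_]; [exact: elem_equiv_refl | exact: FG].
- move=> u uvs uNt; rewrite /F'; case: eqP => [->|/eqP uv] //.
  by rewrite FGt // inE negb_or uv.
exists (corners_mx (fun u => if u == v then P else 1%:M)).
  by apply: corners_mx_elem_prod => u; case: eqP => _ //; exact: elem_prod1.
rewrite corners_mxM; apply: eq_corners_mx => u _.
by rewrite /F'; case: eqP => [->|_]; [exact: FvP | rewrite mul1mx].
Qed.

Lemma monomial_add_compl_corners (z : 'I_N -> I) (sigma : 'S_N)
    (Hsigma : forall t, z (sigma t) = z t) :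
  (forall i, z i \in vs) ->
  monomial_mx sigma (e \o z) + (1%:M - monomial_mx id (e \o z)) =
  corners_mx (fun v => perm_mx (restr_perm_v Hsigma v)).
Proof.
(* Row [i] only involves the corner of [z i], on which [restr_perm_v] is [sigma]. *)
move=> zvs; apply/matrixP => i j; rewrite !mxE summxE (bigD1_seq (z i)) //= big1 ?addr0.
  rewrite !mxE permE /= eqxx.
  case: (sigma i == j); case: (i == j);
    rewrite ?scalerBl ?scale1r ?scale0r ?subrr ?add0r ?addr0 ?sub0r ?subr0 //.
  by rewrite addrCA subrr addr0.
by move=> v Hv; rewrite !mxE permE /= (eq_sym (z i)) (negbTE Hv) subrr scale0r.
Qed.

Lemma corners_dilation_mx (c : I -> k) (q : I -> 'I_N) :
  (forall v, v \in vs -> val (q v) = index v vs) ->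
  corners_mx (fun v => dilation_mx (c v) (q v)) =
  diag_mx (\row_(i < N) if (i < size vs)%N then
                          nth 0 [seq c v *: e v + (1 - e v) | v <- vs] i else 1).
Proof.
move=> Hq; apply/matrixP => i j; rewrite !mxE summxE.
case: (i =P j) => [<-|Hij]; last first.
  rewrite big1 ?addr0 ?mulr0n //.
  by move=> v _; rewrite !mxE; move/eqP/negbTE: Hij => ->; rewrite !mulr0n subrr scale0r.
case: ifP => Hi.
  have x0 : I by move: Hi; case: (vs) => // x.
  set v0 := nth x0 vs i; have v0vs : v0 \in vs := mem_nth _ Hi.
  have qv0 : q v0 = i by apply: val_inj; rewrite Hq // index_uniq.
  rewrite (bigD1_seq v0) //= big_seq_cond big1 ?addr0.
    rewrite !mxE qv0 eqxx ?mulr1n (nth_map x0) // -/v0.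
    by rewrite scalerBl scale1r addrCA.
  move=> v /andP[vvs vv0]; rewrite !mxE.
  have -> : (i == q v) = false.
    apply/negbTE/eqP => iqv; move/eqP: vv0; apply.
    by rewrite /v0 iqv Hq // nth_index.
  by rewrite ?mulr1n subrr scale0r.
rewrite big_seq big1 ?addr0 // => v vvs; rewrite !mxE.
have -> : (i == q v) = false.
  by apply/negbTE/eqP => iqv; move: Hi; rewrite iqv Hq // index_mem vvs.
by rewrite ?mulr1n subrr scale0r.
Qed.

Lemma corners_perm_mx_elem_equiv (s : I -> 'S_N) : (0 < N)%N -> (size vs <= N)%N ->
  elem_equiv (corners_mx (fun v => perm_mx (s v)))
    (diag_mx (\row_(i < N) if (i < size vs)%N then
       nth 0 [seq (-1) ^+ odd_perm (s v) *: e v + (1 - e v) | v <- vs] i else 1)).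
Proof.
move=> N_gt0 vs_N; pose q v : 'I_N := insubd (Ordinal N_gt0) (index v vs).
have Hq v : v \in vs -> val (q v) = index v vs.
  by move=> vvs; rewrite val_insubd (leq_trans _ vs_N) // index_mem.
rewrite -(corners_dilation_mx (fun v => (-1) ^+ odd_perm (s v)) Hq).
apply: corners_mx_elem_equiv => // v.
exact: elem_equiv_perm_mx.
Qed.
End OrthogonalCorners.
End Corners.

Unset Implicit Arguments.

Theorem lemma5p4 (k : fieldType) (E : rf_graph) (R : algType k)
  (p : V0 E -> R) (a b : E1 E -> R) (HR : leavitt_unitization p a b)
  (star : R -> R) (Hstar : leavitt_involution star p a b)
  (h : nat) (hpos : (0 < h)%N) (z : 'I_h -> V0 E) (sigma : 'S_h)
  (Hsigma : forall t, z (sigma t) = z t) :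
  let S : 'M[R]_h := \sum_(t < h) (p (z t))%:M *m delta_mx t (sigma t) in
  let Pr : 'M[R]_h := \sum_(t < h) (p (z t))%:M *m delta_mx t t in
  let U : 'M[R]_h := S + (1%:M - S *m mxstar star S) in
  let vs := undup [seq z t | t <- enum 'I_h] in
  let w (v : V0 E) : R :=
    ((-1 : k) ^+ odd_perm (restr_perm_v Hsigma v)) *: p v + (1 - p v) in
  (S *m mxstar star S = Pr /\ mxstar star S *m S = Pr /\
   Pr *m Pr = Pr /\ mxstar star Pr = Pr) /\
  (mx_invertible U /\
   k1_eq U (diag_mx (\row_(i < size vs) nth 0 [seq w v | v <- vs] i))).
Proof.
move=> S Pr U vs w.
have [[p_idem [p_orth _]] _] := HR.
have p_orth' u v : u != v -> p u * p v = 0 by move/eqP; apply: p_orth.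
have [_ [starD [_ [_ [_ [star_p _]]]]]] := Hstar.
have star0 : star 0 = 0 by apply: (addrI (star 0)); rewrite -starD !addr0.
have pz_perm t : (p \o z) (sigma t) = (p \o z) t by rewrite /= Hsigma.
have pz_star t : star ((p \o z) t) = (p \o z) t := star_p _.
have pz_idem t : (p \o z) t * (p \o z) t = (p \o z) t := p_idem _.
have HS : S = monomial_mx sigma (p \o z) := sum_scalar_delta_mx _ _.
have HPr : Pr = monomial_mx id (p \o z) := sum_scalar_delta_mx _ _.
have SSs : S *m mxstar star S = Pr by rewrite HS HPr monomial_mx_mulmx_star.
split.
  rewrite SSs HS HPr mxstar_mulmx_monomial_mx ?monomial_id_idem ?mxstar_monomial_id //.
split.
  rewrite /U HS; apply: mx_invertible_add_compl.
  - exact: monomial_mx_partial_isometry.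
  - exact: mxstar_monomial_mx_partial_isometry.
  - by rewrite monomial_mx_mulmx_star ?mxstar_mulmx_monomial_mx.
have vs_uniq : uniq vs := undup_uniq _.
have zvs i : z i \in vs by rewrite mem_undup map_f ?mem_enum.
have vs_h : (size vs <= h)%N.
  by rewrite (leq_trans (size_undup _)) // size_map size_enum_ord.
apply: k1_eq_diag_stable => //.
rewrite /U SSs HS HPr (monomial_add_compl_corners p vs_uniq Hsigma zvs).
exact: corners_perm_mx_elem_equiv.
Qed.
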